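(* Let $\mathcal M$ be a finite polyptych lattice over $F$ and let $\mathcal C$ be a maximal-dimensional cone of $\Sigma(\mathcal M)$. If $p,q\in\mathrm{Sp}(\mathcal M)$ satisfy $p(m)=q(m)$ for all $m\in\mathcal C\cap\mathcal M$, then $p=q$. Likewise, if $p,q\in\mathrm{Sp}_{\mathbb R}(\mathcal M)$ agree on $\mathcal C$, then $p=q$.
   Context: Fix a subring $F$ with $\mathbb Z\subseteq F\subseteq\mathbb R$. A map $\psi:M\to M'$ between finite-rank free $F$-modules is piecewise $F$-linear if it is continuous and there is a complete fan of $F$-rational polyhedral cones in $M\otimes_F\mathbb R$ with $\psi$ $F$-linear on each cone. A polyptych lattice of rank $r$ over $F$ is a collection $\{M_\alpha\}_{\alpha\in I}$ of free $F$-modules of rank $r$ with piecewise $F$-linear maps $\mu_{\alpha,\beta}:M_\alpha\to M_\beta$ for all $\alpha,\beta$ with $\mu_{\alpha,\alpha}=\mathrm{id}$, $\mu_{\alpha,\beta}=\mu_{\beta,\alpha}^{-1}$, $\mu_{\beta,\gamma}\circ\mu_{\alpha,\beta}=\mu_{\alpha,\gamma}$; finite if $I$ is finite. Its elements are classes of $\bigsqcup M_\alpha$ under $m_\alpha\sim\mu_{\alpha,\beta}(m_\alpha)$; $\pi_\alpha$ is the chart map to $M_\alpha$; $\mathcal M_{\mathbb R}$ is obtained by tensoring charts with $\mathbb R$. $m+_\alpha m':=\pi_\alpha^{-1}(\pi_\alpha(m)+\pi_\alpha(m'))$, $\lambda m:=\pi_\alpha^{-1}(\lambda\pi_\alpha(m))$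 for $\lambda\ge0$. $\Sigma(\mathcal M)$ is the coarsest complete fan of cones in $\mathcal M_{\mathbb R}$ (sets whose chart images are $F$-rational polyhedral cones) on whose chart images all mutations are linear. A point is $p:\mathcal M\to F$ with $p(m)+p(m')=\min_{\alpha}p(m+_\alpha m')$ and $p(\lambda m)=\lambda p(m)$ ($\lambda\in F_{\ge0}$); $\mathrm{Sp}(\mathcal M)$ is the set of points and $\mathrm{Sp}_{\mathbb R}(\mathcal M)$ the set of points of $\mathcal M_{\mathbb R}$. *)

From HB Require Import structures.
From mathcomp Require Import all_boot all_order all_algebra.
From mathcomp Require Import all_classical all_reals all_analysis.
Set Implicit Arguments. Unset Strict Implicit. Unset Printing Implicit Defensive.
Import Order.TTheory GRing.Theory Num.Theory.
Import numFieldNormedType.Exports.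
Local Open Scope classical_set_scope.
Local Open Scope ring_scope.

Section PolyptychDefs.
Variables (R : realType) (F : subringClosed R) (r : nat).

Notation vec := 'cV[R]_r.

(** the chart module M_alpha = F^r inside M_alpha (x) R = R^r *)
Definition Fvec (v : vec) : Prop := forall i, v i 0 \in F.
Definition Fmx (A : 'M[R]_r) : Prop := forall i j, A i j \in F.

Lemma FvecD (u v : vec) : Fvec u -> Fvec v -> Fvec (u + v).
Proof. by move=> hu hv i; rewrite mxE rpredD. Qed.

Lemma FvecZ (l : R) (v : vec) : l \in F -> Fvec v -> Fvec (l *: v).
Proof. by move=> hl hv i; rewrite mxE rpredM. Qed.

Lemma Fmx_mul (A : 'M[R]_r) (v : vec) : Fmx A -> Fvec v -> Fvec (A *m v).
Proof.
move=> hA hv i; rewrite mxE; apply: rpred_sum => j _; exact: rpredM.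
Qed.

Definition Fcone (S : set vec) : Prop :=
  exists gens : seq vec, (forall g, g \in gens -> Fvec g) /\
    S = [set v | exists c : 'I_(size gens) -> R,
                   (forall i, 0 <= c i) /\ v = \sum_i c i *: gens`_i].

Definition dotv (u x : vec) : R := \sum_i u i 0 * x i 0.

Definition face (S T : set vec) : Prop :=
  exists u : vec, (forall x, S x -> 0 <= dotv u x) /\
    T = [set x | S x /\ dotv u x = 0].

Definition isFan (Sig : set (set vec)) : Prop :=
  [/\ finite_set Sig,
      (forall s, Sig s -> Fcone s),
      (forall s t, Sig s -> face s t -> Sig t) &
      (forall s t, Sig s -> Sig t -> face s (s `&` t) /\ face t (s `&` t))].

Definition complete_fan (Sig : set (set vec)) : Prop :=
  isFan Sig /\ (forall x, exists s, Sig s /\ s x).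

Definition pl (f : vec -> vec) : Prop :=
  continuous f /\
  exists Sig, complete_fan Sig /\
    forall s, Sig s -> exists A : 'M[R]_r, Fmx A /\ forall x, s x -> f x = A *m x.

Lemma pl_Fvec f v : pl f -> Fvec v -> Fvec (f v).
Proof.
move=> [_ [Sig [[_ Sx] hS]]] hv; have [s [Ss sv]] := Sx v.
have [A [hA ->]] := hS s Ss; [exact: Fmx_mul | exact: sv].
Qed.

End PolyptychDefs.

(** a finite polyptych lattice of rank r over F, indexed by the finite type I;
    the chart M_alpha is identified with F^r (and M_alpha (x) R with R^r). *)
Record polyptych (R : realType) (F : subringClosed R) (r : nat) (I : finType) :=
  Polyptych {
    mu : I -> I -> 'cV[R]_r -> 'cV[R]_r;
    mu_id : forall a, mu a a =1 id;
    mu_inv : forall a b, cancel (mu a b) (mu b a);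
    mu_comp : forall a b c, mu b c \o mu a b =1 mu a c;
    mu_pl : forall a b, pl F (mu a b) }.

Section Elements.
Variables (R : realType) (F : subringClosed R) (r : nat) (I : finType)
          (L : polyptych F r I).
Notation vec := 'cV[R]_r.

(** elements of M_R: equivalence classes, represented by their (unique)
    representatives in every chart *)
Record MR := MkMR {
  crd : I -> vec;
  crd_compat : forall a b, crd b = mu L a b (crd a) }.

(** elements of M : classes of elements of the charts M_alpha = F^r *)
Definition inM (m : MR) : Prop := forall a, Fvec F (crd m a).
Record Melt := MkM { mval :> MR; mvalP : inM mval }.

Definition chart_inv (a : I) (v : vec) : MR.
Proof.
refine (@MkMR (fun b => mu L a b v) _).
move=> b c; by rewrite -(mu_comp L a b c).
Defined.

Lemma chart_inv_M (a : I) (v : vec) : Fvec F v -> inM (chart_inv a v).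
Proof. move=> hv b /=; apply: pl_Fvec hv; exact: mu_pl. Qed.

Definition chart_invM (a : I) (v : vec) (hv : Fvec F v) : Melt :=
  MkM (chart_inv_M a hv).

Definition addR (a : I) (m m' : MR) : MR := chart_inv a (crd m a + crd m' a).
Definition scaleR (a : I) (l : R) (m : MR) : MR := chart_inv a (l *: crd m a).

Definition addM (a : I) (m m' : Melt) : Melt :=
  chart_invM a (FvecD (mvalP m a) (mvalP m' a)).
Definition scaleM (a : I) (l : R) (hl : l \in F) (m : Melt) : Melt :=
  chart_invM a (FvecZ hl (mvalP m a)).

Definition isPoint (p : Melt -> R) : Prop :=
  [/\ (forall m, p m \in F),
      (forall m m', (forall a, p m + p m' <= p (addM a m m')) /\
                    (exists a, p m + p m' = p (addM a m m'))) &
      (forall a l (hl : l \in F) m, 0 <= l -> p (scaleM a hl m) = l * p m)].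

Definition Sp : set (Melt -> R) := [set p | isPoint p].

Definition isPointR (p : MR -> R) : Prop :=
  (forall m m', (forall a, p m + p m' <= p (addR a m m')) /\
                (exists a, p m + p m' = p (addR a m m'))) /\
  (forall a l m, 0 <= l -> p (scaleR a l m) = l * p m).

Definition SpR : set (MR -> R) := [set p | isPointR p].

Definition chartim (a : I) (C : set MR) : set vec := (fun m => crd m a) @` C.

Definition admissible_fan (Sig : set (set MR)) : Prop :=
  [/\ finite_set Sig,
      (forall a, complete_fan F (chartim a @` Sig)),
      (forall x : MR, exists C, Sig C /\ C x) &
      (forall C, Sig C -> forall a b, exists A : 'M[R]_r,
           forall v, chartim a C v -> mu L a b v = A *m v)].

Definition is_Sigma (Sig : set (set MR)) : Prop :=
  admissible_fan Sig /\
  forall Sig', admissible_fan Sig' ->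
    forall C', Sig' C' -> exists C, Sig C /\ C' `<=` C.

Definition lin_span (S : set vec) : set vec :=
  [set v | exists (n : nat) (g : 'I_n -> vec) (c : 'I_n -> R),
             (forall i, S (g i)) /\ v = \sum_i c i *: g i].

Definition full_dim (C : set MR) : Prop :=
  exists a, lin_span (chartim a C) = setT.

End Elements.

(** The argument uses only that Σ(M) is an admissible fan, not that it is the
    coarsest one.  Since all mutations are linear on the full-dimensional cone
    C, the chart images of C are linear images of one another, so C spans in
    every chart, and a lattice point d of C whose b-coordinate contains the
    sum of the generators of the b-th chart cone lies deep inside C in every
    chart.  Hence for every x some large multiple c of d satisfies
    x +_b c ∈ C for every chart b.  If p and q agree on C, choose b with
    p(x) + p(c) = p(x +_b c); then
    q(x) + q(c) <= q(x +_b c) = p(x +_b c) = p(x) + p(c) = p(x) + q(c),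
    so q(x) <= p(x), and p = q by symmetry. *)

From HB Require Import structures.
From mathcomp Require Import all_boot all_order all_algebra.
From mathcomp Require Import all_classical all_reals all_analysis.
From mathcomp Require Import lra.
Import Order.TTheory GRing.Theory Num.Theory.
Local Open Scope classical_set_scope.
Local Open Scope ring_scope.
Set Implicit Arguments. Unset Strict Implicit.

Section ConicHull.
Variables (R : realType) (r : nat).
Notation vec := 'cV[R]_r.

Definition conic_hull (gens : seq vec) : set vec :=
  [set v | exists c : 'I_(size gens) -> R,
             (forall i, 0 <= c i) /\ v = \sum_i c i *: gens`_i].

Definition absorbing (S : set vec) (d : vec) : Prop :=
  forall w, exists N : nat, forall N' : nat, (N <= N')%N -> S (w + N'%:R *: d).

Variable gens : seq vec.

Lemma conic_hull_comb (c : 'I_(size gens) -> R) :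
  (forall i, 0 <= c i) -> conic_hull gens (\sum_i c i *: gens`_i).
Proof. by move=> hc; exists c. Qed.

Lemma conic_hull0 : conic_hull gens 0.
Proof.
exists (fun=> 0); split=> //.
by rewrite big1 // => i _; rewrite scale0r.
Qed.

Lemma conic_hullD u v :
  conic_hull gens u -> conic_hull gens v -> conic_hull gens (u + v).
Proof.
move=> [c [hc ->]] [c' [hc' ->]].
exists (fun i => c i + c' i); split; first by move=> i; rewrite addr_ge0.
by rewrite -big_split /=; apply: eq_bigr => i _; rewrite scalerDl.
Qed.

Lemma conic_hullZ l u : 0 <= l -> conic_hull gens u -> conic_hull gens (l *: u).
Proof.
move=> hl [c [hc ->]].
exists (fun i => l * c i); split; first by move=> i; rewrite mulr_ge0.
by rewrite scaler_sumr; apply: eq_bigr => i _; rewrite scalerA.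
Qed.

Lemma conic_hull_sum (J : finType) (P : pred J) (f : J -> vec) :
  (forall j, P j -> conic_hull gens (f j)) ->
  conic_hull gens (\sum_(j | P j) f j).
Proof.
by move=> hf; apply: big_ind => //; [exact: conic_hull0 | exact: conic_hullD].
Qed.

Lemma conic_hull_gens_sum : conic_hull gens (\sum_(i < size gens) gens`_i).
Proof.
exists (fun=> 1); split=> //.
by apply: eq_bigr => i _; rewrite scale1r.
Qed.

Lemma conic_hull_span_comb : lin_span (conic_hull gens) = setT ->
  forall w, exists e : 'I_(size gens) -> R, w = \sum_i e i *: gens`_i.
Proof.
move=> hspan w; have : lin_span (conic_hull gens) w by rewrite hspan.
move=> [n [g [c [hg ->]]]].
have [D hD] := choice hg.
exists (fun i => \sum_j c j * D j i).
under eq_bigr => j _ do rewrite (hD j).2 scaler_sumr.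
rewrite exchange_big /=; apply: eq_bigr => i _.
by rewrite scaler_suml; apply: eq_bigr => j _; rewrite scalerA.
Qed.

Lemma absorbing_gens_sum : lin_span (conic_hull gens) = setT ->
  absorbing (conic_hull gens) (\sum_(i < size gens) gens`_i).
Proof.
move=> hspan w; have [e ->] := conic_hull_span_comb hspan w.
have sum_ge0 : 0 <= \sum_i `|e i| by apply: sumr_ge0.
exists (Num.Def.archi_bound (\sum_i `|e i|)) => N hN.
have e_ge : forall i, - e i <= N%:R.
  move=> i; have := ler_norm (- e i); rewrite normrN.
  have : `|e i| <= \sum_i `|e i|.
    by rewrite (bigD1 i) //= lerDl; apply: sumr_ge0.
  have := archi_boundP sum_ge0.
  have : (Num.Def.archi_bound (\sum_i `|e i|))%:R <= N%:R :> R by rewrite ler_nat.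
  lra.
rewrite scaler_sumr -big_split /=.
rewrite (eq_bigr (fun i => (e i + N%:R) *: gens`_i)) => [|i _]; last first.
  by rewrite scalerDl.
by apply: conic_hull_comb => i; have := e_ge i; lra.
Qed.

Lemma absorbingD d u : absorbing (conic_hull gens) d ->
  conic_hull gens u -> absorbing (conic_hull gens) (d + u).
Proof.
move=> hd hu w; have [N hN] := hd w; exists N => N' hN'.
rewrite scalerDr addrA; apply: conic_hullD; first exact: hN.
by apply: conic_hullZ.
Qed.

End ConicHull.

Section LinearSpan.
Variables (R : realType) (r : nat).
Notation vec := 'cV[R]_r.

Lemma lin_span_mulmx (S T : set vec) (A : 'M[R]_r) v :
  (forall u, S u -> T (A *m u)) -> lin_span S v -> lin_span T (A *m v).
Proof.
move=> hST [n [g [c [hg ->]]]].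
exists n, (fun j => A *m g j), c; split; first by move=> j; apply: hST.
by rewrite mulmx_sumr; apply: eq_bigr => j _; rewrite scalemxAr.
Qed.

Lemma mx_eq1_on_spanning (S : set vec) (M : 'M[R]_r) :
  lin_span S = setT -> (forall v, S v -> M *m v = v) -> M = 1%:M.
Proof.
move=> hspan hM; apply/matrixP => i j.
pose ej : vec := delta_mx j 0.
have [n [g [c [hg ej_comb]]]] : lin_span S ej by rewrite hspan.
have fix_ej : M *m ej = ej.
  rewrite ej_comb mulmx_sumr; apply: eq_bigr => k _.
  by rewrite -scalemxAr hM.
have := congr1 (fun v : vec => v i 0) fix_ej.
by rewrite -colE !mxE eqxx andbT.
Qed.

End LinearSpan.

Section Charts.
Variables (R : realType) (F : subringClosed R) (r : nat) (I : finType)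
          (L : polyptych F r I).
Notation vec := 'cV[R]_r.

Lemma MR_ext (x y : MR L) : crd x =1 crd y -> x = y.
Proof.
case: x => cx hx; case: y => cy hy /= /funext exy; subst cy.
by congr MkMR; exact: Prop_irrelevance.
Qed.

Lemma crd_chart_inv a (v : vec) : crd (chart_inv L a v) a = v.
Proof. exact: mu_id. Qed.

Lemma chartimP (C : set (MR L)) a (x : MR L) : chartim a C (crd x a) <-> C x.
Proof.
split=> [[y Cy exy] | Cx]; last by exists x.
suff -> : x = y by [].
by apply: MR_ext => b; rewrite (crd_compat x a b) (crd_compat y a b) exy.
Qed.

Lemma chart_inv_in (C : set (MR L)) a (v : vec) :
  chartim a C v -> C (chart_inv L a v).
Proof. by move=> Cv; apply/(chartimP _ a); rewrite crd_chart_inv. Qed.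

Lemma admissible_fan_Fcone (Sig : set (set (MR L))) C :
  admissible_fan Sig -> Sig C -> forall a, Fcone F (chartim a C).
Proof.
case=> _ hfan _ _ SigC a; have [[_ hcone _ _] _] := hfan a.
by apply: hcone; exists C.
Qed.

Lemma admissible_fan_linear (Sig : set (set (MR L))) C :
  admissible_fan Sig -> Sig C -> forall a b, exists A : 'M[R]_r,
    forall v, chartim a C v -> mu L a b v = A *m v.
Proof. by case=> _ _ _ hlin; exact: hlin. Qed.

End Charts.

Section LinearCone.
Variables (R : realType) (F : subringClosed R) (r : nat) (I : finType)
          (L : polyptych F r I) (C : set (MR L)).
Notation vec := 'cV[R]_r.
Hypothesis C_conic : forall a, exists gens : seq vec,
  (forall g, g \in gens -> Fvec F g) /\ chartim a C = conic_hull gens.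
Hypothesis C_linear : forall a b, exists A : 'M[R]_r,
  forall v, chartim a C v -> mu L a b v = A *m v.

Lemma crd_linear_on_cone a b :
  exists A : 'M[R]_r, forall x, C x -> crd x b = A *m crd x a.
Proof.
have [A hA] := C_linear a b; exists A => x Cx.
by rewrite (crd_compat x a b) hA //; apply/chartimP.
Qed.

Lemma cone_sum_in (J : finType) (x : J -> MR L) a :
  (forall j, C (x j)) -> C (chart_inv L a (\sum_j crd (x j) a)).
Proof.
have [gens [_ Ca]] := C_conic a.
move=> Cx; apply: chart_inv_in; rewrite Ca.
by apply: conic_hull_sum => j _; rewrite -Ca; apply/chartimP.
Qed.

Lemma cone_scale_in (x : MR L) a l :
  0 <= l -> C x -> C (chart_inv L a (l *: crd x a)).
Proof.
have [gens [_ Ca]] := C_conic a.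
move=> l_ge0 Cx; apply: chart_inv_in; rewrite Ca.
by apply: conic_hullZ => //; rewrite -Ca; apply/chartimP.
Qed.

Lemma crd_cone_sum (J : finType) (x : J -> MR L) a b :
  (forall j, C (x j)) ->
  crd (chart_inv L a (\sum_j crd (x j) a)) b = \sum_j crd (x j) b.
Proof.
move=> Cx; have [A hA] := crd_linear_on_cone a b.
rewrite hA; last exact: cone_sum_in.
rewrite crd_chart_inv mulmx_sumr.
by apply: eq_bigr => j _; rewrite -hA.
Qed.

Lemma crd_cone_scale (x : MR L) a b l :
  0 <= l -> C x -> crd (chart_inv L a (l *: crd x a)) b = l *: crd x b.
Proof.
move=> l_ge0 Cx; have [A hA] := crd_linear_on_cone a b.
by rewrite hA; [rewrite crd_chart_inv -scalemxAr -hA | exact: cone_scale_in].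
Qed.

Lemma full_dim_chart : full_dim C -> forall b, lin_span (chartim b C) = setT.
Proof.
move=> [a hspan] b; have [A hA] := C_linear a b; have [B hB] := C_linear b a.
have BA1 : B *m A = 1%:M.
  apply: (mx_eq1_on_spanning hspan) => _ [y Cy <-].
  rewrite -mulmxA -hA; last exact/chartimP.
  rewrite -(crd_compat y a b) -hB; last exact/chartimP.
  by rewrite -(crd_compat y b a).
apply/seteqP; split=> // w _.
rewrite -[w]mul1mx -(mulmx1C BA1) -mulmxA.
apply: (lin_span_mulmx (S := chartim a C)); last by rewrite hspan.
move=> _ [y Cy <-]; rewrite -hA; last exact/chartimP.
by rewrite -crd_compat; apply/chartimP.
Qed.

Hypothesis C_full : full_dim C.

Lemma exists_absorbing_lattice_point :
  exists d : MR L, [/\ C d, inM d & forall b, absorbing (chartim b C) (crd d b)].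
Proof.
have [a _] := C_full.
have [G hG] := choice C_conic.
pose s b := \sum_(i < size (G b)) (G b)`_i.
have Fs b : Fvec F (s b).
  move=> k; rewrite summxE; apply: rpred_sum => i _.
  by apply: (hG b).1; exact: mem_nth.
pose e b := chart_inv L b (s b).
have Ce b : C (e b).
  by apply: chart_inv_in; rewrite (hG b).2; exact: conic_hull_gens_sum.
exists (chart_inv L a (\sum_b crd (e b) a)); split.
- exact: cone_sum_in.
- apply: chart_inv_M => k; rewrite summxE; apply: rpred_sum => b _.
  exact: (chart_inv_M L b (Fs b) a k).
- move=> b; rewrite crd_cone_sum // (bigD1 b) //= mu_id (hG b).2.
  apply: absorbingD.
    by apply: absorbing_gens_sum; rewrite -(hG b).2; exact: full_dim_chart.
  by apply: conic_hull_sum => b' _; rewrite -(hG b).2; exact/(chartimP _ _ (e b')).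
Qed.

(** Since [I] is finite, one multiple of [d] works for all charts at once. *)
Lemma exists_cone_translate (x : MR L) :
  exists c : MR L, [/\ C c, inM c & forall b, C (addR b x c)].
Proof.
have [a _] := C_full.
have [d [Cd Md d_abs]] := exists_absorbing_lattice_point.
have [Nb hNb] := choice (fun b => d_abs b (crd x b)).
pose N := (\max_b Nb b)%N.
have N_ge0 : 0 <= N%:R :> R by exact: ler0n.
exists (chart_inv L a (N%:R *: crd d a)); split.
- exact: cone_scale_in.
- by apply: chart_inv_M; apply: FvecZ; [exact: rpred_nat | exact: Md].
- move=> b; apply: chart_inv_in.
  rewrite crd_cone_scale //; apply: hNb; exact: leq_bigmax.
Qed.

End LinearCone.

Section MinAdditive.
Variables (R : realType) (T J : Type) (add : J -> T -> T -> T).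

Definition min_additive (p : T -> R) : Prop :=
  forall m m', (forall a, p m + p m' <= p (add a m m')) /\
               (exists a, p m + p m' = p (add a m m')).

Variable P : set T.
Hypothesis P_translate : forall x, exists c, P c /\ forall a, P (add a x c).

Lemma min_additive_le (p q : T -> R) : min_additive p -> min_additive q ->
  (forall m, P m -> p m = q m) -> forall x, q x <= p x.
Proof.
move=> hp hq pq x; have [c [Pc Pxc]] := P_translate x.
have [_ [a pxc]] := hp x c; have [qxc _] := hq x c.
by have := qxc a; rewrite -(pq _ Pc) -(pq _ (Pxc a)) -pxc lerD2r.
Qed.

Lemma min_additive_eq (p q : T -> R) : min_additive p -> min_additive q ->
  (forall m, P m -> p m = q m) -> p = q.
Proof.
move=> hp hq pq; apply/funext => x; apply/le_anti.
by rewrite !min_additive_le // => m Pm; rewrite pq.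
Qed.

End MinAdditive.

Theorem mainTheorem2 (R : realType) (F : subringClosed R) (r : nat)
  (I : finType) (L : polyptych F r I)
  (Sig : set (set (MR L))) (C : set (MR L)) :
  is_Sigma Sig -> Sig C -> full_dim C ->
  (forall p q : Melt L -> R, Sp p -> Sp q ->
     (forall m : Melt L, C (mval m) -> p m = q m) -> p = q) /\
  (forall p q : MR L -> R, SpR p -> SpR q ->
     (forall x : MR L, C x -> p x = q x) -> p = q).
Proof.
move=> [hSig _] SigC C_full.
have C_Fcone := admissible_fan_Fcone hSig SigC.
have C_linear := admissible_fan_linear hSig SigC.
have translate := exists_cone_translate C_Fcone C_linear C_full.
split.
- have translateM (x : Melt L) :
      exists c, C (mval c) /\ forall a, C (mval (addM a x c)).
    by have [c [Cc Mc Cxc]] := translate (mval x); exists (MkM Mc).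
  by move=> p q [_ hp _] [_ hq _]; exact: (min_additive_eq translateM).
- have translateR (x : MR L) : exists c, C c /\ forall a, C (addR a x c).
    by have [c [Cc _ Cxc]] := translate x; exists c.
  by move=> p q [hp _] [hq _]; exact: (min_additive_eq translateR).
Qed.
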